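(* Let $X$ be a real separable Hilbert space with inner product $(\cdot,\cdot)_X$, let $T>0$, and let $0=t_1<t_2<\cdots<t_{s+1}=T$. Set $\delta_j=t_{j+1}-t_j$ for $j=1,\dots,s$ and $\Delta=\mathrm{diag}(\delta_1,\dots,\delta_s)\in\mathbb{R}^{s\times s}$. Let $\{\phi_k\}_{k=1}^m\subset X$ be linearly independent, let $M\in\mathbb{R}^{m\times m}$ have entries $M_{j,k}=(\phi_j,\phi_k)_X$, and let $U\in\mathbb{R}^{m\times s}$ have entries $U_{k,j}$. Define $u_j=\sum_{k=1}^m U_{k,j}\phi_k\in X$ for $j=1,\dots,s$, and $u\in L^2(0,T;X)$ by $u(t)=\sum_{j=1}^s u_j\chi_j(t)$, where $\chi_j(t)=1$ for $t_j<t<t_{j+1}$ and $\chi_j(t)=0$ otherwise. Let $K:L^2(0,T)\to X$ be the POD operator $Kf=\int_0^T u(t)f(t)\,dt$. Then $\{\sigma_i,w_i,v_i\}\subset\mathbb{R}\times\mathbb{R}^s_\Delta\times\mathbb{R}^m_M$ are the core singular values and singular vectors of the matrix $U\Delta:\mathbb{R}^s_\Delta\to\mathbb{R}^m_M$ if and only if $\{\sigma_i,f_i,x_i\}\subset\mathbb{R}\times L^2(0,T)\times X$ are the core singular values and singular vectors of $K:L^2(0,T)\to X$, where for all $i$ the vectors $v_i=(v_{i,1},\dots,v_{i,m})$ and $x_i$ are related by $$x_i=\sum_{k=1}^m v_{i,k}\phi_k,$$ and $w_i=(w_{i,1},\dots,w_{i,s})$ and $f_i$ are related by $$w_{i,j}=\int_0^T\delta_j^{-1}\chi_j(t)f_i(t)\,dt,\qquad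 f_i(t)=\sum_{\ell=1}^s w_{i,\ell}\chi_\ell(t).$$
   Context: For a symmetric positive definite matrix $M\in\mathbb{R}^{m\times m}$, $\mathbb{R}^m_M$ denotes $\mathbb{R}^m$ with inner product $(x,y)_M=y^TMx$; similarly $\mathbb{R}^s_\Delta$. $\mathbb{R}^k$ without subscript carries the standard inner product. For a compact linear operator $A:\mathcal{X}\to\mathcal{Y}$ between separable Hilbert spaces with Hilbert adjoint $A^*$, the core singular values and singular vectors are the positive singular values $\sigma_1\ge\sigma_2\ge\cdots>0$ (square roots of the positive eigenvalues of $A^*A$, equivalently of $AA^*$), together with orthonormal families $\{\xi_i\}\subset\mathcal{X}$ (eigenvectors of $A^*A$) and $\{\eta_i\}\subset\mathcal{Y}$ (eigenvectors of $AA^*$) satisfying $A\xi_i=\sigma_i\eta_i$ and $A^*\eta_i=\sigma_i\xi_i$ for all $i$; in the triples above, the first vector lies in the domain and the second in the codomain. For a matrix $A:\mathbb{R}^s_\Delta\to\mathbb{R}^m_M$, the adjoint is $A^*=\Delta^{-1}A^TM$. The adjoint of $K$ is $(K^*x)(t)=(x,u(t))_X$. *)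

From HB Require Import structures.
From mathcomp Require Import all_boot all_order all_algebra.
From mathcomp Require Import all_classical all_reals all_analysis.
Set Implicit Arguments. Unset Strict Implicit. Unset Printing Implicit Defensive.
Import Order.TTheory GRing.Theory Num.Theory.
Local Open Scope classical_set_scope.
Local Open Scope ring_scope.

Section Defs.
Variable R : realType.

Section Hilbert.
Variable X : lmodType R.
Variable ip : X -> X -> R.

Definition ip_norm (x : X) : R := Num.sqrt (ip x x).

Definition is_real_inner_product : Prop :=
  [/\ forall x y, ip x y = ip y x,
      forall a x y z, ip (a *: x + y) z = a * ip x z + ip y z,
      forall x, 0 <= ip x x
    & forall x, ip x x = 0 -> x = 0].

Definition ip_complete : Prop :=
  forall a : nat -> X,
    (forall e, 0 < e -> exists N, forall n k, (N <= n)%N -> (N <= k)%N ->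
        ip_norm (a n - a k) < e) ->
    exists l : X, forall e, 0 < e -> exists N, forall n, (N <= n)%N ->
        ip_norm (a n - l) < e.

Definition ip_separable : Prop :=
  exists d : nat -> X, forall x e, 0 < e -> exists n, ip_norm (x - d n) < e.

Definition is_real_separable_hilbert : Prop :=
  [/\ is_real_inner_product, ip_complete & ip_separable].

Definition lin_indep (m : nat) (phi : 'I_m -> X) : Prop :=
  forall c : 'I_m -> R, \sum_(k < m) c k *: phi k = 0 -> forall k, c k = 0.
End Hilbert.

Definition L2 (T : R) (f : R -> R) : Prop :=
  measurable_fun `]0, T[%classic f /\
  (@lebesgue_measure R).-integrable `]0, T[%classic (fun t => (f t ^+ 2)%:E).

Definition L2ip (T : R) (f g : R -> R) : \bar R :=
  let D := `]0, T[%classic in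
  (\int[@lebesgue_measure R]_(t in D) (f t * g t)%:E)%E.

(* grid t_1 < ... < t_{s+1} is stored 0-based: tt 0 = 0, ..., tt s = T *)
Definition delta (tt : nat -> R) (j : nat) : R := tt j.+1 - tt j.

Definition chi (tt : nat -> R) (j : nat) (t : R) : R :=
  if (tt j < t) && (t < tt j.+1) then 1 else 0.

Definition Delta (tt : nat -> R) (s : nat) : 'M[R]_s :=
  diag_mx (\row_(j < s) delta tt j).

Definition pod_u (X : lmodType R) (m s : nat) (phi : 'I_m -> X) (U : 'M[R]_(m, s))
  (tt : nat -> R) (t : R) : X :=
  \sum_(j < s) chi tt j t *: (\sum_(k < m) U k j *: phi k).

Definition ip_mx (n : nat) (D : 'M[R]_n) (x y : 'cV[R]_n) : R := (y^T *m D *m x) 0 0.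

(* Hilbert adjoint of A : R^s_D -> R^m_M *)
Definition mx_adj (m s : nat) (M : 'M[R]_m) (D : 'M[R]_s) (A : 'M[R]_(m, s))
  : 'M[R]_(s, m) := invmx D *m A^T *m M.

Definition core_svd_mx (m s : nat) (M : 'M[R]_m) (D : 'M[R]_s) (A : 'M[R]_(m, s))
  (r : nat) (sigma : 'I_r -> R) (w : 'I_r -> 'cV[R]_s) (v : 'I_r -> 'cV[R]_m) : Prop :=
  [/\ forall i, 0 < sigma i,
      forall i j : 'I_r, (i <= j)%N -> sigma j <= sigma i
    & forall i j, ip_mx D (w i) (w j) = (i == j)%:R] /\
  [/\ forall i j, ip_mx M (v i) (v j) = (i == j)%:R,
      forall i, A *m w i = sigma i *: v i,
      forall i, mx_adj M D A *m v i = sigma i *: w i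
    & forall y : 'cV[R]_s, (forall i, ip_mx D y (w i) = 0) -> A *m y = 0].

Definition core_svd_L2X (X : lmodType R) (ip : X -> X -> R) (T : R)
  (K : (R -> R) -> X) (Kstar : X -> R -> R)
  (r : nat) (sigma : 'I_r -> R) (f : 'I_r -> R -> R) (x : 'I_r -> X) : Prop :=
  [/\ forall i, 0 < sigma i,
      forall i j : 'I_r, (i <= j)%N -> sigma j <= sigma i
    & forall i, L2 T (f i)] /\
  [/\
      forall i j, L2ip T (f i) (f j) = ((i == j)%:R)%:E,
      forall i j, ip (x i) (x j) = (i == j)%:R,
      forall i, K (f i) = sigma i *: x i,
      forall i, {ae @lebesgue_measure R, forall t, `]0, T[%classic t ->
                   Kstar (x i) t = sigma i * f i t}
    & forall g, L2 T g -> (forall i, L2ip T g (f i) = 0%E) -> K g = 0].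

End Defs.

From HB Require Import structures.
From mathcomp Require Import all_boot all_order all_algebra.
From mathcomp Require Import all_classical all_reals all_analysis.
From mathcomp Require Import measurable_realfun lra.
Set Implicit Arguments. Unset Strict Implicit. Unset Printing Implicit Defensive.
Import Order.TTheory GRing.Theory Num.Theory.
Local Open Scope classical_set_scope.
Local Open Scope ring_scope.

(* Both operators are conjugate to U Delta by the same two maps. The map
   c |-> step c = sum_j c_j chi_j is an isometry from R^s_Delta into L^2(0,T)
   that carries w_i to f_i (up to a null set), and c |-> comb c = sum_k c_k phi_k
   is an isometry from R^m_M onto span phi that carries v_i to x_i. Since
   K g = comb (U coef g), where coef g = (int chi_j g)_j, and coef (step c) = Delta c,
   K acts on step functions as U Delta, and K^* (comb a) = step (U^T M a), where
   U^T M is the M,Delta-adjoint of U Delta. For the completeness conditions, g is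
   L^2-orthogonal to f_i iff Delta^-1 coef g is Delta-orthogonal to w_i, and
   K g = comb (U Delta (Delta^-1 coef g)). Almost-everywhere equalities between step
   functions are equalities of coefficients because every cell has positive measure. *)

Section POD.
Variables (R : realType) (T : R) (s : nat) (tt : nat -> R).
Hypotheses (ht0 : tt 0%N = 0) (htT : tt s = T)
  (htinc : forall j, (j < s)%N -> tt j < tt j.+1).
Local Notation mu := (@lebesgue_measure R).
Local Notation D := (`]0, T[%classic : set R).

Let mD : measurable (D : set (measurableTypeR R)).
Proof. exact: measurable_itv. Qed.

Lemma grid_le i j : (i <= j <= s)%N -> tt i <= tt j.
Proof.
move=> /andP[]; elim: j => [|j IH]; first by rewrite leqn0 => /eqP->.
rewrite leq_eqVlt => /orP[/eqP->//|]; rewrite ltnS => ij js.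
apply: le_trans (IH ij (ltnW js)) _; exact/ltW/htinc.
Qed.

Lemma delta_gt0 j : (j < s)%N -> 0 < delta tt j.
Proof. by move=> js; rewrite subr_gt0 htinc. Qed.

Lemma cell_subset j : (j < s)%N -> `]tt j, tt j.+1[%classic `<=` D.
Proof.
move=> js t /=; rewrite !in_itv /= => /andP[a b]; apply/andP; split.
  by apply: le_lt_trans a; rewrite -ht0; apply: grid_le; rewrite leq0n ltnW.
by apply: lt_le_trans b _; rewrite -htT; apply: grid_le; rewrite js leqnn.
Qed.

Lemma chiE j : chi tt j = \1_(`]tt j, tt j.+1[%classic) :> (R -> R).
Proof.
apply/funext => t; rewrite /chi indicE.
by case: ifP => h; [rewrite mem_set | rewrite memNset]; rewrite //= in_itv /= h.
Qed.

Lemma chi01 j t : chi tt j t = 0 \/ chi tt j t = 1.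
Proof. by rewrite /chi; case: ifP; auto. Qed.

Lemma chiM j l t : (j < s)%N -> (l < s)%N ->
  chi tt j t * chi tt l t = (j == l)%:R * chi tt j t.
Proof.
move=> js ls; case: (eqVneq j l) => [->|jl].
  by rewrite mul1r; case: (chi01 l t) => ->; rewrite ?mul0r ?mul1r.
rewrite mul0r.
wlog jl' : j l js ls jl / (j < l)%N.
  move=> H; case: (ltngtP j l) => h; first exact: H.
  - by rewrite mulrC; apply: H => //; rewrite eq_sym.
  - by move: jl; rewrite h eqxx.
rewrite /chi; case: ifP => [/andP[_ b]|]; last by rewrite mul0r.
case: ifP => [/andP[c _]|]; last by rewrite mulr0.
have : tt j.+1 <= tt l by apply: grid_le; rewrite jl' ltnW.
by rewrite leNgt (lt_trans c b).
Qed.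

Lemma measurable_chi j A : measurable_fun A (chi tt j).
Proof. by rewrite chiE; apply: measurable_indic. Qed.

Lemma integrable_chi j : (j < s)%N -> mu.-integrable D (EFin \o chi tt j).
Proof.
move=> js; rewrite chiE; apply: (integrableS measurableT) => //.
exact: integrable_indic_itv.
Qed.

Lemma Rintegral_chi j : (j < s)%N -> Rintegral mu D (chi tt j) = delta tt j.
Proof.
move=> js; rewrite /Rintegral chiE integral_indic // setIidl; last exact: cell_subset.
have := @lebesgue_measure_itv R `]tt j, tt j.+1[.
by rewrite /= lte_fin htinc // -EFinB => ->.
Qed.

Let integrable_indicD : mu.-integrable D (EFin \o \1_D).
Proof. by apply: (integrableS measurableT) (integrable_indic_itv _ _ _ _). Qed.

Lemma integrable_L2 g : L2 T g -> mu.-integrable D (EFin \o g).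
Proof.
move=> [mg ig].
apply: (le_integrable mD); last exact: (integrableD mD integrable_indicD ig).
- exact/measurable_EFinP.
- move=> t Dt /=; rewrite indicE mem_set //= lee_fin.
  rewrite [X in _ <= X]ger0_norm ?addr_ge0 ?sqr_ge0 //.
  have := sqr_ge0 (`|g t| - 1); rewrite -[g t ^+ 2]real_normK ?num_real //.
  by have := normr_ge0 (g t); nra.
Qed.

Lemma integrable_chiM_L2 j g : L2 T g ->
  mu.-integrable D (EFin \o (fun t => chi tt j t * g t)).
Proof.
move=> hg; apply: (le_integrable mD (g := EFin \o g)); last exact: integrable_L2.
- apply/measurable_EFinP/measurable_funM.
    exact: measurable_chi.
  by case: hg.
- move=> t _ /=; rewrite lee_fin normrM.
  by case: (chi01 j t) => ->; rewrite ?normr0 ?normr1 ?mul0r ?mul1r.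
Qed.

Definition step (c : 'cV[R]_s) (t : R) : R := \sum_(l < s) c l 0 * chi tt l t.

Definition coef (g : R -> R) : 'cV[R]_s :=
  \col_j Rintegral mu D (fun t => chi tt j t * g t).

Lemma measurable_step c A : measurable_fun A (step c).
Proof.
apply: measurable_sum => l.
by apply: measurable_funM; [exact: measurable_cst | exact: measurable_chi].
Qed.

Lemma stepZ a c t : step (a *: c) t = a * step c t.
Proof. by rewrite /step mulr_sumr; apply: eq_bigr => l _; rewrite mxE mulrA. Qed.

Lemma L2_step c : L2 T (step c).
Proof.
split; first exact: measurable_step.
pose C := \sum_(l < s) `|c l 0|.
apply: (le_integrable mD); last exact: (integrableZl mD (C ^+ 2) integrable_indicD).
- by apply/measurable_EFinP/measurable_funX; exact: measurable_step.
- move=> t Dt /=; rewrite indicE mem_set // mulr1 lee_fin.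
  have hb : `|step c t| <= C.
    apply: le_trans (ler_norm_sum _ _ _) _; apply: ler_sum => l _.
    by rewrite normrM; case: (chi01 l t) => ->; rewrite ?normr0 ?normr1 ?mulr0 ?mulr1.
  rewrite !ger0_norm ?sqr_ge0 // -real_normK ?num_real //.
  by rewrite lerXn2r // nnegrE sumr_ge0.
Qed.

Lemma integral_mul_step g c : L2 T g ->
  (\int[mu]_(t in D) (g t * step c t)%:E = ((c^T *m coef g) 0 0)%:E)%E.
Proof.
move=> hg; have ig j := integrable_chiM_L2 j hg.
under eq_integral => t _.
  rewrite /step mulr_sumr.
  under eq_bigr => l _ do rewrite mulrCA (mulrC (g t)).
  rewrite -sumEFin.
  over.
rewrite integral_sum //; last first.
  by move=> l; apply: eq_integrable (integrableZl mD (c l 0) (ig l)) => // t _ /=.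
rewrite mxE -sumEFin; apply: eq_bigr => l _; rewrite !mxE.
rewrite -RintegralZl // /Rintegral fineK //.
exact: integrable_fin_num (integrableZl mD (c l 0) (ig l)).
Qed.

Lemma chi_mul_step c (j : 'I_s) t : chi tt j t * step c t = c j 0 * chi tt j t.
Proof.
rewrite /step mulr_sumr (bigD1 j) //= big1 ?addr0 => [|l].
  by rewrite mulrCA chiM // eqxx mul1r.
rewrite -val_eqE => /negPf lj.
by rewrite mulrCA chiM // eq_sym lj mul0r mulr0.
Qed.

Lemma stepE c (j : 'I_s) t : tt j < t < tt j.+1 -> step c t = c j 0.
Proof.
move=> jt; have chi_j : chi tt j t = 1 by rewrite /chi jt.
by rewrite -[step c t]mul1r -chi_j chi_mul_step chi_j mulr1.
Qed.

Lemma coef_step c : coef (step c) = Delta tt s *m c.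
Proof.
apply/matrixP => j k; rewrite ord1 /Delta mul_diag_mx !mxE.
under eq_Rintegral => t _ do rewrite chi_mul_step.
by rewrite RintegralZl ?integrable_chi ?Rintegral_chi // mulrC.
Qed.

Lemma Delta_unit : Delta tt s \in unitmx.
Proof.
rewrite unitmxE det_diag unitfE; apply/lt0r_neq0/prodr_gt0 => j _.
by rewrite mxE delta_gt0.
Qed.

Lemma ae_in_cell (P : R -> Prop) j : (j < s)%N ->
  {ae mu, forall t, D t -> P t} -> exists2 t, tt j < t < tt j.+1 & P t.
Proof.
move=> js [N [mN N0 sN]]; apply: contrapT => noP.
have cellN : `]tt j, tt j.+1[%classic `<=` N.
  move=> t jt; apply: sN => /= DP; apply: noP; exists t; first by move: jt; rewrite /= in_itv.
  exact/DP/(cell_subset js).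
have cell_gt0 : (0 < mu `]tt j, tt j.+1[%classic)%E.
  have := @lebesgue_measure_itv R `]tt j, tt j.+1[.
  by rewrite /= lte_fin htinc // => ->; rewrite lte_fin subr_gt0 htinc.
have N_le0 : (mu N <= 0)%E by rewrite N0.
have := le_trans (le_measure mu (mem_set (measurable_itv _)) (mem_set mN) cellN) N_le0.
by rewrite leNgt cell_gt0.
Qed.

Lemma step_ae_inj a c : step a = step c %[ae mu in D] -> a = c.
Proof.
move=> ac; apply/matrixP => j k; rewrite ord1.
have [t jt act] := ae_in_cell (ltn_ord j) ac.
by rewrite -(stepE a jt) -(stepE c jt).
Qed.

Lemma ae_eq_integral_mul (h g1 g2 : R -> R) : measurable_fun D h ->
  measurable_fun D g1 -> measurable_fun D g2 ->
  g1 = g2 %[ae mu in D] ->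
  (\int[mu]_(t in D) (h t * g1 t)%:E = \int[mu]_(t in D) (h t * g2 t)%:E)%E.
Proof.
move=> mh m1 m2 g12; apply: ae_eq_integral => //.
- exact/measurable_EFinP/measurable_funM.
- exact/measurable_EFinP/measurable_funM.
- exact: (ae_eq_comp2 (mu := mu) (D := D) (fun t y => (h t * y)%:E) g12).
Qed.

Lemma coef_ae_step (h : R -> R) c : measurable_fun D h ->
  h = step c %[ae mu in D] -> coef h = Delta tt s *m c.
Proof.
move=> mh hc; rewrite -coef_step; apply/matrixP => j k; rewrite !mxE /Rintegral.
by rewrite (ae_eq_integral_mul _ mh _ hc) //; [exact: measurable_chi | exact: measurable_step].
Qed.

Lemma L2ip_ae_step (g h : R -> R) c : L2 T g -> measurable_fun D h ->
  h = step c %[ae mu in D] ->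
  L2ip T g h = ((c^T *m coef g) 0 0)%:E.
Proof.
move=> hg mh hc; rewrite /L2ip -integral_mul_step //.
by apply: ae_eq_integral_mul => //; [case: hg | exact: measurable_step].
Qed.

Variables (X : lmodType R) (ip : X -> X -> R).
Hypothesis hip : is_real_inner_product ip.

Lemma ipC x y : ip x y = ip y x.
Proof. by case: hip. Qed.

Lemma ipDl x y z : ip (x + y) z = ip x z + ip y z.
Proof. by case: hip => _ ipl _ _; have := ipl 1 x y z; rewrite scale1r mul1r. Qed.

Lemma ip0l z : ip 0 z = 0.
Proof. by case: hip => _ ipl _ _; have := ipl (-1) 0 0 z; rewrite scaler0 addr0 mulN1r addNr. Qed.

Lemma ipZl a x z : ip (a *: x) z = a * ip x z.
Proof. by case: hip => _ ipl _ _; rewrite -[a *: x]addr0 ipl ip0l addr0. Qed.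

Lemma ip_suml n (F : 'I_n -> X) z : ip (\sum_i F i) z = \sum_i ip (F i) z.
Proof. by elim/big_rec2: _ => [|i y1 y2 _ <-]; [exact: ip0l | exact: ipDl]. Qed.

Lemma ip_inj_l x y : (forall z, ip x z = ip y z) -> x = y.
Proof.
move=> xy; apply/eqP; rewrite -subr_eq0; apply/eqP; case: hip => _ _ _; apply.
by rewrite -scaleN1r ipDl ipZl xy mulN1r addrN.
Qed.

Variables (m : nat) (phi : 'I_m -> X).
Hypothesis hphi : lin_indep phi.

Definition comb (a : 'cV[R]_m) : X := \sum_(k < m) a k 0 *: phi k.

Lemma combZ c a : comb (c *: a) = c *: comb a.
Proof. by rewrite /comb scaler_sumr; apply: eq_bigr => k _; rewrite mxE scalerA. Qed.

Lemma comb_inj : injective comb.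
Proof.
move=> a b ab; apply/matrixP => k l; rewrite ord1; apply/subr0_eq; move: k.
apply: (hphi (c := fun k => a k 0 - b k 0)).
by under eq_bigr => k _ do rewrite scalerBl; rewrite sumrB -/(comb a) ab subrr.
Qed.

Lemma comb0 : comb 0 = 0.
Proof. by rewrite /comb big1 // => k _; rewrite mxE scale0r. Qed.

Lemma ip_comb_l a y : ip (comb a) y = \sum_(k < m) a k 0 * ip (phi k) y.
Proof. by rewrite ip_suml; apply: eq_bigr => k _; rewrite ipZl. Qed.

Variable M : 'M[R]_m.
Hypothesis hM : forall j k, M j k = ip (phi j) (phi k).

Lemma ip_comb a b : ip (comb a) (comb b) = ip_mx M a b.
Proof.
rewrite ip_comb_l /ip_mx mxE; apply: eq_bigr => j _.
rewrite ipC ip_comb_l !mxE mulr_sumr mulr_suml; apply: eq_bigr => k _.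
by rewrite !mxE hM mulrC.
Qed.

Variable U : 'M[R]_(m, s).

Lemma pod_uE t : pod_u phi U tt t = \sum_(j < s) chi tt j t *: comb (col j U).
Proof.
by apply: eq_bigr => j _; congr (_ *: _); apply: eq_bigr => k _; rewrite mxE.
Qed.

Lemma ip_pod_u_l t y :
  ip (pod_u phi U tt t) y = step (\col_j ip (comb (col j U)) y) t.
Proof. by rewrite pod_uE ip_suml; apply: eq_bigr => j _; rewrite ipZl mxE mulrC. Qed.

Lemma ip_comb_pod_u a t : ip (comb a) (pod_u phi U tt t) = step (U^T *m M *m a) t.
Proof.
rewrite ipC ip_pod_u_l; congr step; apply/matrixP => j k.
by rewrite ord1 mxE ipC ip_comb /ip_mx tr_col -!row_mul mxE.
Qed.

Lemma mx_adj_mulmx_Delta : mx_adj M (Delta tt s) (U *m Delta tt s) = U^T *m M.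
Proof.
by rewrite /mx_adj trmx_mul /Delta tr_diag_mx !mulmxA mulVmx ?mul1mx ?Delta_unit.
Qed.

Variable K : (R -> R) -> X.
Hypothesis hK : forall g, L2 T g -> forall y : X,
  ip (K g) y = Rintegral mu D (fun t => ip (pod_u phi U tt t) y * g t).

Lemma K_coef g : L2 T g -> K g = comb (U *m coef g).
Proof.
move=> hg; apply: ip_inj_l => y; rewrite hK //.
under eq_Rintegral => t _ do rewrite ip_pod_u_l mulrC.
rewrite /Rintegral integral_mul_step //= ip_comb_l mxE.
under eq_bigr => j _ do rewrite !mxE ip_comb_l mulr_suml.
rewrite exchange_big; apply: eq_bigr => k _ /=.
by rewrite mxE mulr_suml; apply: eq_bigr => j _; rewrite !mxE mulrAC.
Qed.

Variables (r : nat) (sigma : 'I_r -> R) (w : 'I_r -> 'cV[R]_s)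
  (v : 'I_r -> 'cV[R]_m) (f : 'I_r -> R -> R) (x : 'I_r -> X).
Hypotheses (hf : forall i, L2 T (f i)) (hxv : forall i, x i = comb (v i))
  (hfw : forall i, f i = step (w i) %[ae mu in D]).

Let coef_f i : coef (f i) = Delta tt s *m w i.
Proof. by apply: coef_ae_step (hfw i); case: (hf i). Qed.

Let L2ip_f g i : L2 T g -> L2ip T g (f i) = (((w i)^T *m coef g) 0 0)%:E.
Proof. by move=> hg; apply: L2ip_ae_step (hfw i) => //; case: (hf i). Qed.

Lemma L2ip_f_f i j : L2ip T (f i) (f j) = (ip_mx (Delta tt s) (w i) (w j))%:E.
Proof. by rewrite L2ip_f // coef_f /ip_mx mulmxA. Qed.

Lemma ip_x_x i j : ip (x i) (x j) = ip_mx M (v i) (v j).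
Proof. by rewrite !hxv ip_comb. Qed.

Lemma K_f_iff i : K (f i) = sigma i *: x i <-> (U *m Delta tt s) *m w i = sigma i *: v i.
Proof.
rewrite K_coef // coef_f hxv -combZ mulmxA.
by split=> [/comb_inj|->].
Qed.

Lemma Kstar_x_iff i :
  {ae mu, forall t, D t -> ip (x i) (pod_u phi U tt t) = sigma i * f i t} <->
  mx_adj M (Delta tt s) (U *m Delta tt s) *m v i = sigma i *: w i.
Proof.
rewrite mx_adj_mulmx_Delta hxv; split=> [Kf|adj].
- apply: step_ae_inj; move: Kf (hfw i).
  apply: (@filterS2 _ _ (ae_filter_ringOfSetsType mu)) => t Kt ft Dt.
  by rewrite -ip_comb_pod_u Kt // ft // stepZ.
- apply: (@filterS _ _ (ae_filter_ringOfSetsType mu) _ _ _ (hfw i)) => t ft Dt.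
  by rewrite ip_comb_pod_u adj stepZ ft.
Qed.

Lemma K_core_iff :
  (forall g, L2 T g -> (forall i, L2ip T g (f i) = 0%E) -> K g = 0) <->
  (forall y, (forall i, ip_mx (Delta tt s) y (w i) = 0) -> (U *m Delta tt s) *m y = 0).
Proof.
split=> [Kc y yw | Ac g hg gf].
- have hy := L2_step y.
  apply: comb_inj; rewrite comb0 -mulmxA -coef_step -K_coef //.
  apply: (Kc _ hy) => i; rewrite L2ip_f // coef_step mulmxA.
  by have := yw i; rewrite /ip_mx => ->.
- pose y := invmx (Delta tt s) *m coef g.
  have Uy : (U *m Delta tt s) *m y = U *m coef g by rewrite -mulmxA mulKVmx ?Delta_unit.
  rewrite K_coef // -Uy Ac ?comb0 // => i.
  by rewrite /ip_mx -mulmxA mulKVmx ?Delta_unit //; apply/EFin_inj; rewrite -L2ip_f.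
Qed.
End POD.

Theorem proposition3p1 (R : realType) (X : lmodType R) (ip : X -> X -> R)
  (HX : is_real_separable_hilbert ip)
  (T : R) (hT : 0 < T) (s : nat) (tt : nat -> R)
  (ht0 : tt 0%N = 0) (htT : tt s = T)
  (htinc : forall j, (j < s)%N -> tt j < tt j.+1)
  (m : nat) (phi : 'I_m -> X) (hphi : lin_indep phi)
  (M : 'M[R]_m) (hM : forall j k, M j k = ip (phi j) (phi k))
  (U : 'M[R]_(m, s))
  (K : (R -> R) -> X)
  (hK : forall g, L2 T g -> forall y : X,
          ip (K g) y = Rintegral (@lebesgue_measure R) `]0, T[%classic
                         (fun t => ip (pod_u phi U tt t) y * g t))
  (r : nat) (sigma : 'I_r -> R) (w : 'I_r -> 'cV[R]_s) (v : 'I_r -> 'cV[R]_m)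
  (f : 'I_r -> R -> R) (x : 'I_r -> X)
  (hf : forall i, L2 T (f i))
  (hxv : forall i, x i = \sum_(k < m) v i k 0 *: phi k)
  (hwf : forall i (j : 'I_s), w i j 0 = Rintegral (@lebesgue_measure R) `]0, T[%classic
                         (fun t => (delta tt j)^-1 * chi tt j t * f i t))
  (hfw : forall i, {ae @lebesgue_measure R, forall t, `]0, T[%classic t ->
                     f i t = \sum_(l < s) w i l 0 * chi tt l t}) :
  core_svd_mx M (Delta tt s) (U *m Delta tt s) sigma w v <->
  core_svd_L2X ip T K (fun y t => ip y (pod_u phi U tt t)) sigma f x.
Proof.
have hip : is_real_inner_product ip by case: HX.
have f_ip := L2ip_f_f ht0 htT htinc hf hfw.
have x_ip := ip_x_x hip hM hxv.
have K_f := K_f_iff ht0 htT htinc hip hphi hK sigma hf hxv hfw.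
have Kstar_x := Kstar_x_iff ht0 htT htinc hip hM U sigma hxv hfw.
have core := K_core_iff ht0 htT htinc hip hphi hK hf hfw.
split=> [[[s_gt0 s_decr w_orth] [v_orth UDw adj_v UD_core]]
        |[[s_gt0 s_decr _] [f_orth x_orth K_fx Kstar_xf K_core]]].
- split=> //; split=> [i j|i j|i|i|].
  + by rewrite f_ip w_orth.
  + by rewrite x_ip v_orth.
  + by apply/K_f; apply: UDw.
  + by apply/Kstar_x; apply: adj_v.
  + by apply/core.
- split; first by split=> // i j; have := f_orth i j; rewrite f_ip => -[].
  split=> [i j|i|i|].
  + by rewrite -x_ip.
  + by apply/K_f; apply: K_fx.
  + by apply/Kstar_x; apply: Kstar_xf.
  + by apply/core.
Qed.
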